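(* Let $g:\mathbb R\times\mathbb R_+\to\mathbb R_+$ be non-decreasing and locally Lipschitz in each of its variables, with $g(0,0)=0$ and $\int_1^\infty s^{-1-p}g(s,s^{p/q})\,ds<\infty$ for some $p,q>0$. Let $u:\Omega\to\mathbb R$ and $v:\Omega\to\mathbb R_+$ be measurable; for $s>0$ and $w\in\{u,v\}$ set $E_w(s):=\{x\in\Omega:|w(x)|>s\}$ and $e_w(s):=\int_{E_w(s)}\phi_\mu\,dx$. Assume there are constants $C_u,C_v>0$ such that $e_u(s)\le C_us^{-p}$ and $e_v(s)\le C_vs^{-q}$ for all $s>0$. Then for every $s_0>0$, $$\|g(u,v)\|_{L^1(\Omega;\phi_\mu)}\le\int_{E_u^c(s_0)\cap E_v^c(s_0^{p/q})}g(u,v)\phi_\mu\,dx+2p(C_u+C_v)\int_{s_0}^\infty s^{-1-p}g(s,s^{p/q})\,ds.$$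
   Context: $\Omega\subset\mathbb R^N$ ($N\ge3$) is a bounded $C^2$ domain, $\Sigma\subset\partial\Omega$ a compact $C^2$ submanifold without boundary of dimension $k$, $d_\Sigma=\mathrm{dist}(\cdot,\Sigma)$, $\mu\le((N-k)/2)^2$, $L_\mu=\Delta+\mu d_\Sigma^{-2}$ with positive first Dirichlet eigenvalue $\lambda_\mu$, and $\phi_\mu>0$ the associated first eigenfunction; $L^1(\Omega;\phi_\mu)$ is the $L^1$ space with weight $\phi_\mu\,dx$. Complements $E^c$ are taken in $\Omega$. *)

From HB Require Import structures.
From mathcomp Require Import all_boot all_order all_algebra.
From mathcomp Require Import all_classical all_reals all_analysis.
Set Implicit Arguments. Unset Strict Implicit. Unset Printing Implicit Defensive.
Import Order.TTheory GRing.Theory Num.Theory.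
Local Open Scope classical_set_scope.
Local Open Scope ring_scope.

Definition locLip_on (R : realType) (D : set R) (f : R -> R) : Prop :=
  forall M : R, 0 < M -> exists L : R, forall x y : R,
    D x -> D y -> `|x| <= M -> `|y| <= M -> `|f x - f y| <= L * `|x - y|.

Definition Eset (d : measure_display) (T : measurableType d) (R : realType)
  (Omega : set T) (w : T -> R) (s : R) : set T :=
  [set x | Omega x /\ s < `|w x|].

Definition eweight (d : measure_display) (T : measurableType d) (R : realType)
  (mu : {measure set T -> \bar R}) (phi : T -> R)
  (Omega : set T) (w : T -> R) (s : R) : \bar R :=
  (\int[mu]_(x in Eset Omega w s) (phi x)%:E)%E.

(* Split Omega into E := E_u(s0) ∪ E_v(s0^(p/q)) and its complement, whose integral
   appears unchanged on the right.  On E use the dyadic thresholds s_j := s0 2^(j/p),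
   for which s_j^(-p) halves at each step, and the sets S_j := E_u(s_j) ∪ E_v(s_j^(p/q)),
   whose phi-weight is at most (Cu + Cv) s_j^(-p).  With G(t) := g(t, t^(p/q)),
   h_0 := 0 and h_j := G(s_j), monotonicity of g gives
   g(u, v) <= sum_j (h_(j+1) - h_j) 1_(S_j) on S_0 = E.  Integrating, then summing by
   parts with s_j^(-p) = 2 s_(j+1)^(-p), bounds the integral over E by
   (Cu + Cv) sum_j G(s_j) s_j^(-p), and G(s_j) s_j^(-p) <= 2p int_(s_j)^(s_(j+1))
   s^(-1-p) G(s) ds because G is non-decreasing. *)

From HB Require Import structures.
From mathcomp Require Import all_boot all_order all_algebra.
From mathcomp Require Import all_classical all_reals all_analysis.
From mathcomp Require Import measurable_realfun.
From mathcomp Require Import ring lra.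
Import Order.TTheory GRing.Theory Num.Theory numFieldNormedType.Exports.
Local Open Scope classical_set_scope.
Local Open Scope ring_scope.

Lemma locLip_continuous {R : realType} (f : R -> R) :
  locLip_on setT f -> continuous f.
Proof.
move=> fL x; have [L Lf] := fL (`|x| + 1) (ltr_pwDr ltr01 (normr_ge0 x)).
apply/cvgrPdist_lt => e e0; apply/nbhs_normP.
have L1 : 0 < `|L| + 1 by rewrite ltr_pwDr.
exists (Num.min 1 (e / (`|L| + 1))) => [|y /=].
  by rewrite /= lt_min ltr01 divr_gt0.
rewrite lt_min => /andP[xy1 xye].
have xM : `|x| <= `|x| + 1 by rewrite lerDl.
have yM : `|y| <= `|x| + 1.
  have -> : y = x - (x - y) by ring.
  by apply: le_trans (ler_normB _ _) _; rewrite lerD2l ltW.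
apply: le_lt_trans (Lf x y I I xM yM) _.
apply: le_lt_trans (ler_wpM2r (normr_ge0 _) (ler_norm L)) _.
apply: le_lt_trans (ler_wpM2l (normr_ge0 L) (ltW xye)) _.
by rewrite mulrA ltr_pdivrMr // mulrC ltr_pM2l // ltrDl.
Qed.

Lemma exists_expr_gt {R : archiRealFieldType} (c M : R) :
  1 < c -> exists n, M < c ^+ n.
Proof.
move=> c1; have c0 : 0 < c - 1 by rewrite subr_gt0.
have bernoulli n : 1 + n%:R * (c - 1) <= c ^+ n.
  elim: n => [|n IHn]; first by rewrite mul0r addr0 expr0.
  rewrite exprS; apply: le_trans (ler_wpM2l (ltW (lt_trans ltr01 c1)) IHn).
  have -> : c * (1 + n%:R * (c - 1))
            = 1 + n.+1%:R * (c - 1) + n%:R * (c - 1) ^+ 2.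
    by rewrite -natr1; ring.
  by rewrite lerDl mulr_ge0 // sqr_ge0.
exists (Num.trunc (M / (c - 1))).+1; apply: lt_le_trans (bernoulli _).
have := truncnS_gt (M / (c - 1)); rewrite ltr_pdivrMr //; lra.
Qed.

Lemma nneseries_increments_halving_le {R : realType} (h a : nat -> R) :
  (forall j, 0 <= h j) -> (forall j, h j <= h j.+1) ->
  (forall j, 0 <= a j) -> (forall j, a j = 2 * a j.+1) ->
  (\sum_(j <oo) ((h j.+1 - h j) * a j)%:E <= \sum_(j <oo) (h j * a j)%:E)%E.
Proof.
move=> h_ge0 h_nd a_ge0 a_half.
have b_ge0 j : (0 <= (h j * a j)%:E)%E by rewrite lee_fin mulr_ge0.
have inc_ge0 j : (0 <= ((h j.+1 - h j) * a j)%:E)%E.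
  by rewrite lee_fin mulr_ge0 // subr_ge0.
set X := (\sum_(j <oo) ((h j.+1 - h j) * a j)%:E)%E.
pose Y := (\sum_(j <oo) (h j.+1 * a j.+1)%:E)%E.
have bE : (\sum_(j <oo) (h j * a j)%:E = (h 0%N * a 0%N)%:E + Y)%E.
  rewrite nneseries_recl // -nneseries_addn //; congr (_ + _)%E.
  by apply: eq_eseriesr => j _; rewrite addn1.
have XbE : (X + \sum_(j <oo) (h j * a j)%:E = 2%:E * Y)%E.
  rewrite -nneseriesD // /Y -nneseriesZl //.
  apply: eq_eseriesr => j _; rewrite -EFinD -EFinM; congr EFin.
  by rewrite [a j]a_half; ring.
have X_ge0 : (0 <= X)%E by apply: nneseries_ge0.
have Y_ge0 : (0 <= Y)%E by apply: nneseries_ge0.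
rewrite bE; move: XbE; rewrite bE => {bE}; clearbody X Y.
case: Y Y_ge0 => [y _|_ _|//]; last by rewrite addey ?leey.
have -> : 2%E = 2%:E :> \bar R by [].
case: X X_ge0 => [x _|_|//]; rewrite -!EFinD -EFinM ?addye //.
have := mulr_ge0 (h_ge0 0%N) (a_ge0 0%N).
by move=> ? [?]; rewrite lee_fin; lra.
Qed.

Lemma le_nneseries_increments_indic {T : Type} {R : realType} (S : nat -> set T)
    (h : nat -> R) (x : T) (y w : R) :
  0 <= w -> h 0%N = 0 -> (forall j, h j <= h j.+1) ->
  (exists K, ~ S K x) -> (forall K, ~ S K x -> y <= h K) ->
  ((y * w)%:E <= \sum_(j <oo) ((h j.+1 - h j) * \1_(S j) x * w)%:E)%E.
Proof.
move=> w_ge0 h0 h_nd [K0 notSK0] yh.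
have term_ge0 j : (0 <= ((h j.+1 - h j) * \1_(S j) x * w)%:E)%E.
  by rewrite lee_fin !mulr_ge0 // ?subr_ge0.
have exK : exists K, ~~ `[< S K x >] by exists K0; apply/asboolPn.
case: (ex_minnP exK) => K /asboolPn notSK minK.
have SK j : (j < K)%N -> S j x.
  move=> jK; apply: contrapT => notSj.
  by move: (minK j (introT (asboolPn _) notSj)); rewrite leqNgt jK.
rewrite (nneseries_split 0 K) // add0n.
apply: le_trans (leeDl _ (nneseries_ge0 _)); last by move=> j _ _.
rewrite sumEFin lee_fin -big_distrl /= ler_wpM2r //.
rewrite (eq_big_nat _ _ (F2 := fun j => h j.+1 - h j)); last first.
  by move=> j /andP[_ jK]; rewrite indicE mem_set ?mulr1 //; exact: SK.
by rewrite telescope_sumr // h0 subr0 yh.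
Qed.

Lemma nondecreasing_diag_powR {R : realType} (g : R -> R -> R) (r : R) :
  (forall s1 s2 t, 0 <= t -> s1 <= s2 -> g s1 t <= g s2 t) ->
  (forall s t1 t2, 0 <= t1 -> t1 <= t2 -> g s t1 <= g s t2) -> 0 <= r ->
  forall t t', 0 <= t -> t <= t' -> g t (t `^ r) <= g t' (t' `^ r).
Proof.
move=> g_nd1 g_nd2 r_ge0 t t' t_ge0 tt'.
apply: le_trans (g_nd1 _ _ _ (powR_ge0 _ _) tt') _.
apply: g_nd2; first exact: powR_ge0.
by apply: ge0_ler_powR; rewrite ?nnegrE // (le_trans t_ge0 tt').
Qed.

Lemma measurable_fun_nondecreasing2 {R : realType} {d : measure_display}
    {T : measurableType d} (D : set T) (g : R -> R -> R) (u v : T -> R) :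
  measurable D -> measurable_fun D u -> measurable_fun D v ->
  (forall x, D x -> 0 <= v x) ->
  (forall s1 s2 t, 0 <= t -> s1 <= s2 -> g s1 t <= g s2 t) ->
  (forall s t1 t2, 0 <= t1 -> t1 <= t2 -> g s t1 <= g s t2) ->
  (forall t, 0 <= t -> continuous (g^~ t)) ->
  measurable_fun D (fun x => g (u x) (v x)).
Proof.
move=> mD mfu mfv v_ge0 g_nd1 g_nd2 g_cont1.
apply: (measurability _ (RGenOInfty.measurableE R)) => //.
move=> /= _ [_ [a ->] <-]; rewrite preimage_itvoy.
have vE x : D x -> Num.max (v x) 0 = v x.
  by move=> Dx; apply/max_idPl; exact: v_ge0.
(* clipping at 0 makes [g r] non-decreasing on the whole real line *)
have mgr (r : R) : measurable_fun D (fun x => g r (Num.max (v x) 0)).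
  have mgr0 : measurable_fun setT (fun t : R => g r (Num.max t 0)).
    apply: nondecreasing_measurable => // t1 t2 t12.
    apply: g_nd2; first by rewrite le_max lexx orbT.
    by rewrite ge_max !le_max t12 lexx /= orbT.
  exact: measurableT_comp mgr0 mfv.
(* left continuity of g in its first variable lets a rational below u x
   witness a < g (u x) (v x) *)
rewrite [X in measurable X](_ : _ = \bigcup_(q : rat)
    ((D `&` [set x | ratr q < u x]) `&`
     (D `&` [set x | a < g (ratr q) (Num.max (v x) 0)]))).
  apply: bigcupT_measurable_rat => q; apply: measurableI.
  - by rewrite -preimage_itvoy; apply: mfu => //; exact: measurable_itv.
  - by rewrite -preimage_itvoy; apply: mgr => //; exact: measurable_itv.
apply/seteqP; split => [x [Dx /= agx]|x [q _ [[Dx /= qu] [_ /= agq]]]]; last first.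
  split => //; apply: lt_le_trans agq _; rewrite vE //.
  exact: g_nd1 (v_ge0 _ Dx) (ltW qu).
have [e /= e0 ball_e] :=
  (nbhs_normP _ _).1 (cvgr_gt _ (g_cont1 _ (v_ge0 x Dx) (u x)) _ agx).
have [|q] := @rat_in_itvoo R (u x - e) (u x); first by rewrite ltrBlDr ltrDl.
rewrite in_itv /= => /andP[uxe_q qu].
exists q => //; split; split => //=; rewrite vE //; apply: ball_e => /=.
by rewrite gtr0_norm ?subr_gt0 // ltrBlDl -ltrBlDr.
Qed.

Lemma nondecreasing_halfline_measurable {R : realType} (a : R) (D : set R)
    (G : R -> R) :
  measurable D -> D `<=` `[a, +oo[ ->
  (forall s t, a <= s -> s <= t -> G s <= G t) -> measurable_fun D G.
Proof.
move=> mD Da G_nd; apply: (eq_measurable_fun (G \o Num.max a)).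
  move=> t; rewrite inE => /Da; rewrite /= in_itv /= andbT => aLt.
  by rewrite /= (max_idPr aLt).
apply: nondecreasing_measurable => // s t st /=.
by apply: G_nd; [rewrite le_max lexx | rewrite ge_max !le_max lexx st orbT].
Qed.

Lemma integral_powR_itv {R : realType} (p a b : R) : p != 0 -> 0 < a -> a < b ->
  (\int[lebesgue_measure]_(x in `[a, b[) (x `^ (-1 - p))%:E
    = ((a `^ (-p) - b `^ (-p)) / p)%:E)%E.
Proof.
move=> p0 a0 ab.
pose F (y : R) := - p^-1 * y `^ (- p).
have dF (x : R) : 0 < x -> is_derive x 1 F (x `^ (-1 - p)).
  move=> x0; have := is_deriveZ (- p^-1) (is_derive1_powR (- p) x0).
  by rewrite /GRing.scale /= mulrA mulNr mulrN opprK mulVf // mul1r addrC.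
rewrite integral_itv_bndo_bndc; last first.
  by apply/measurable_EFinP; apply: measurable_funS (measurable_powR _).
rewrite (@continuous_FTC2 _ _ F).
- by rewrite /F -EFinB; congr EFin; field.
- exact: ab.
- apply: derivable_within_continuous => x; rewrite in_itv /= => /andP[ax _].
  by apply: derivable_powR; rewrite in_itv /= andbT (lt_le_trans a0 ax).
- split.
  + by move=> x; rewrite in_itv /= => /andP[ax _]; case: (dF x (lt_trans a0 ax)).
  + apply: cvg_at_right_filter; apply/differentiable_continuous.
    by rewrite -derivable1_diffP; case: (dF a a0).
  + apply: cvg_at_left_filter; apply/differentiable_continuous.
    by rewrite -derivable1_diffP; case: (dF b (lt_trans a0 ab)).
- move=> x; rewrite in_itv /= => /andP[ax _].
  by rewrite derive1E; apply: derive_val; exact: dF (lt_trans a0 ax).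
Qed.

Lemma integral_powR_itv_ge {R : realType} (G : R -> R) (p a b : R) :
  p != 0 -> 0 < a -> a < b -> measurable_fun `[a, b[ G -> 0 <= G a ->
  (forall t, a <= t -> t < b -> G a <= G t) ->
  ((G a * ((a `^ (-p) - b `^ (-p)) / p))%:E
    <= \int[lebesgue_measure]_(t in `[a, b[) (t `^ (-1 - p) * G t)%:E)%E.
Proof.
move=> p0 a0 ab mG Ga_ge0 G_nd.
have mI : measurable (`[a, b[ : set R) by exact: measurable_itv.
have mpow : measurable_fun `[a, b[ (fun t : R => t `^ (-1 - p)).
  exact: measurable_funS (measurable_powR _).
rewrite EFinM -integral_powR_itv // -ge0_integralZl_EFin //; last 2 first.
- by move=> t _; rewrite lee_fin powR_ge0.
- exact/measurable_EFinP.
apply: ge0_le_integral => //.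
- by move=> t _; rewrite -EFinM lee_fin mulr_ge0 // powR_ge0.
- by apply: emeasurable_funM => //; exact/measurable_EFinP.
- by apply/measurable_EFinP; exact: measurable_funM.
move=> t; rewrite /= in_itv /= => /andP[ta tb].
by rewrite -EFinM lee_fin mulrC ler_wpM2l ?powR_ge0 ?G_nd.
Qed.

Lemma nneseries_integral_itv_le {R : realType} (s : nat -> R) (f : R -> \bar R) :
  (forall j, s j < s j.+1) -> measurable_fun `[s 0%N, +oo[ f ->
  (forall t, s 0%N <= t -> (0 <= f t)%E) ->
  (\sum_(j <oo) \int[lebesgue_measure]_(t in `[s j, s j.+1[) f t
    <= \int[lebesgue_measure]_(t in `[s 0%N, +oo[) f t)%E.
Proof.
move=> s_lt mf f_ge0.
have s_le : {homo s : i j / (i <= j)%N >-> i <= j}.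
  by apply: homo_leq => [x|y x z|i]; [exact: lexx|exact: le_trans|exact: ltW].
pose I j := `[s j, s j.+1[%classic.
have mI j : measurable (I j) by exact: measurable_itv.
have IT : \bigcup_j I j `<=` `[s 0%N, +oo[.
  move=> t [j _]; rewrite /I /= !in_itv /= andbT => /andP[+ _].
  exact/le_trans/s_le.
have tI : trivIset setT I.
  move=> i j _ _ [t []]; rewrite /I /= !in_itv /= => /andP[si it] /andP[sj jt].
  by have [/s_le ?|/s_le ?|//] := ltngtP i j; exfalso; lra.
rewrite -ge0_integral_bigcup //; last 2 first.
- exact: measurable_funS mf.
- by move=> t /IT; rewrite /= in_itv /= andbT; exact: f_ge0.
apply: ge0_subset_integral => //; first exact: bigcupT_measurable.
by move=> t; rewrite /= in_itv /= andbT; exact: f_ge0.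
Qed.

Section dyadic_scale.
Context {R : realType} (p s0 : R).
Hypotheses (p_gt0 : 0 < p) (s0_gt0 : 0 < s0).

Definition dyadic_scale (j : nat) : R := s0 * (2 `^ p^-1) ^+ j.

Lemma dyadic_scale0 : dyadic_scale 0 = s0.
Proof. by rewrite /dyadic_scale expr0 mulr1. Qed.

Let base_gt1 : 1 < 2 `^ p^-1 :> R.
Proof.
rewrite /powR gt_eqF // expR_gt1 mulr_gt0 ?invr_gt0 // ln_gt0 //.
by rewrite ltr1n.
Qed.

Lemma dyadic_scale_gt0 j : 0 < dyadic_scale j.
Proof. by rewrite mulr_gt0 // exprn_gt0 // (lt_trans ltr01 base_gt1). Qed.

Lemma dyadic_scale_ltS j : dyadic_scale j < dyadic_scale j.+1.
Proof. by rewrite /dyadic_scale exprSr mulrA ltr_pMr // dyadic_scale_gt0. Qed.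

Lemma homo_dyadic_scale : {homo dyadic_scale : i j / (i <= j)%N >-> i <= j}.
Proof.
apply: homo_leq => [x|y x z|i]; [exact: lexx|exact: le_trans|].
exact/ltW/dyadic_scale_ltS.
Qed.

Lemma powR_dyadic_scaleS j :
  dyadic_scale j.+1 `^ (- p) = dyadic_scale j `^ (- p) / 2.
Proof.
have baseN : (2 `^ p^-1) `^ (- p) = 2^-1 :> R.
  by rewrite powRN -powRrM mulVf ?gt_eqF // powRr1.
rewrite {1}/dyadic_scale exprSr mulrA powRM ?(ltW (dyadic_scale_gt0 j)) //.
by rewrite baseN ?powR_ge0.
Qed.

Lemma dyadic_scale_exceeds (y z r : R) : 0 < r -> 0 <= z ->
  exists K, y <= dyadic_scale K /\ z <= dyadic_scale K `^ r.
Proof.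
move=> r_gt0 z_ge0.
have [K MK] := exists_expr_gt _ (Num.max y (z `^ r^-1) / s0) base_gt1.
exists K; move: MK; rewrite ltr_pdivrMr // mulrC gt_max => /andP[/ltW yK zK].
split => //; have -> : z = (z `^ r^-1) `^ r.
  by rewrite -powRrM mulVf ?gt_eqF // powRr1.
apply: ge0_ler_powR; rewrite ?nnegrE ?powR_ge0 ?(ltW r_gt0) ?(ltW zK) //.
exact: le_trans (powR_ge0 _ _) (ltW zK).
Qed.

Lemma dyadic_sum_le_integral (G : R -> R) :
  measurable_fun `[s0, +oo[ G -> (forall t, s0 <= t -> 0 <= G t) ->
  (forall t t', s0 <= t -> t <= t' -> G t <= G t') ->
  (\sum_(j <oo) (G (dyadic_scale j) * dyadic_scale j `^ (- p))%:E
    <= (2 * p)%:E * \int[lebesgue_measure]_(t in `[s0, +oo[)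
                       (t `^ (-1 - p) * G t)%:E)%E.
Proof.
move=> mG G_ge0 G_nd; set s := dyadic_scale.
have s0_le j : s0 <= s j by rewrite -dyadic_scale0; exact: homo_dyadic_scale.
have mGk : measurable_fun `[s0, +oo[ (fun t => (t `^ (-1 - p) * G t)%:E).
  apply/measurable_EFinP; apply: measurable_funM => //.
  exact: measurable_funS (measurable_powR _).
have Gk_ge0 t : s0 <= t -> (0 <= (t `^ (-1 - p) * G t)%:E)%E.
  by move=> ?; rewrite lee_fin mulr_ge0 ?powR_ge0 ?G_ge0.
have Ik_ge0 j : (0 <= \int[lebesgue_measure]_(t in `[s j, s j.+1[)
                  (t `^ (-1 - p) * G t)%:E)%E.
  apply: integral_ge0 => t; rewrite /= in_itv /= => /andP[sj _].
  exact/Gk_ge0/(le_trans (s0_le j)).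
apply: (@le_trans _ _ (\sum_(j <oo) ((2 * p)%:E *
    \int[lebesgue_measure]_(t in `[s j, s j.+1[) (t `^ (-1 - p) * G t)%:E))%E).
  apply: lee_nneseries => [j _ _|j _].
    by rewrite lee_fin mulr_ge0 ?powR_ge0 ?G_ge0.
  (* int_(s_j)^(s_(j+1)) t^(-1-p) dt = s_j^(-p) / (2p) *)
  have -> : G (s j) * s j `^ (- p)
            = 2 * p * (G (s j) * ((s j `^ (- p) - s j.+1 `^ (- p)) / p)).
    by rewrite powR_dyadic_scaleS; field; exact: lt0r_neq0.
  rewrite EFinM; apply: lee_wpmul2l; first by rewrite lee_fin mulr_ge0 // ltW.
  apply: integral_powR_itv_ge;
    rewrite ?lt0r_neq0 ?dyadic_scale_gt0 ?dyadic_scale_ltS ?G_ge0 //.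
  - apply: measurable_funS mG => //; apply: subitvP.
    by rewrite subitvE bnd_simp s0_le.
  - by move=> t sjt _; exact: G_nd.
rewrite nneseriesZl //; apply: lee_wpmul2l; first by rewrite lee_fin mulr_ge0 // ltW.
by have := nneseries_integral_itv_le _ _ dyadic_scale_ltS; rewrite dyadic_scale0; apply.
Qed.

Lemma dyadic_increments_le_integral (G : R -> R) (h : nat -> R) :
  measurable_fun `[s0, +oo[ G -> (forall t, s0 <= t -> 0 <= G t) ->
  (forall t t', s0 <= t -> t <= t' -> G t <= G t') ->
  (forall j, 0 <= h j) -> (forall j, h j <= h j.+1) ->
  (forall j, h j <= G (dyadic_scale j)) ->
  (\sum_(j <oo) ((h j.+1 - h j) * dyadic_scale j `^ (- p))%:E
    <= (2 * p)%:E * \int[lebesgue_measure]_(t in `[s0, +oo[)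
                       (t `^ (-1 - p) * G t)%:E)%E.
Proof.
move=> mG G_ge0 G_nd h_ge0 h_nd hG.
apply: le_trans (nneseries_increments_halving_le _ _ h_ge0 h_nd _ _) _.
- by move=> j; exact: powR_ge0.
- by move=> j; rewrite powR_dyadic_scaleS mulrC divfK.
apply: le_trans _ (dyadic_sum_le_integral _ mG G_ge0 G_nd).
apply: lee_nneseries => [j _ _|j _]; first by rewrite lee_fin mulr_ge0 ?powR_ge0.
by rewrite lee_fin ler_wpM2r ?powR_ge0.
Qed.

End dyadic_scale.

Section integral_subsets.
Context {R : realType} {d : measure_display} {T : measurableType d}.
Variable mu : {measure set T -> \bar R}.

Lemma integral_indicM (D S : set T) (f : T -> R) :
  (\int[mu]_(x in D) (\1_S x * f x)%:E = \int[mu]_(x in D `&` S) (f x)%:E)%E.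
Proof.
rewrite integral_mkcondr; apply: eq_integral => x _.
by rewrite /patch indicE; case: (x \in S); rewrite ?mul1r ?mul0r.
Qed.

Lemma ge0_integral_setU_le (A B : set T) (f : T -> \bar R) :
  measurable A -> measurable B -> measurable_fun (A `|` B) f ->
  (forall x, (A `|` B) x -> (0 <= f x)%E) ->
  (\int[mu]_(x in A `|` B) f x
    <= \int[mu]_(x in A) f x + \int[mu]_(x in B) f x)%E.
Proof.
move=> mA mB mf f_ge0; rewrite -(setDUK (@subsetUl _ A B)).
have mBA : measurable ((A `|` B) `\` A).
  by apply: measurableD => //; exact: measurableU.
rewrite ge0_integral_setU ?setDUK //; last by rewrite disj_set2E setDIK.
apply: leeD2l; apply: ge0_subset_integral => //.
- by apply: measurable_funS mf; [exact: measurableU | move=> x; right].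
- by move=> x Bx; apply: f_ge0; right.
- by move=> x [[|]].
Qed.

End integral_subsets.

Section weighted_level_sets.
Context {R : realType} {d : measure_display} {T : measurableType d}.
Variables (mu : {measure set T -> \bar R}) (Omega : set T) (phi : T -> R).
Hypotheses (mOmega : measurable Omega) (mphi : measurable_fun Omega phi)
  (phi_ge0 : forall x, Omega x -> 0 <= phi x).

Lemma measurable_Eset (w : T -> R) (s : R) :
  measurable_fun Omega w -> measurable (Eset Omega w s).
Proof.
move=> mw; rewrite (_ : Eset Omega w s = Omega `&` (Num.norm \o w) @^-1` `]s, +oo[).
  exact: (measurableT_comp (@normr_measurable R _) mw) mOmega _ (measurable_itv _).
by apply/seteqP; split => x /=; rewrite in_itv /= andbT.
Qed.

Lemma integral_Eset_setU_le (w1 w2 : T -> R) (s1 s2 : R) :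
  measurable_fun Omega w1 -> measurable_fun Omega w2 ->
  (\int[mu]_(x in Eset Omega w1 s1 `|` Eset Omega w2 s2) (phi x)%:E
    <= eweight mu phi Omega w1 s1 + eweight mu phi Omega w2 s2)%E.
Proof.
move=> mw1 mw2; have EO : Eset Omega w1 s1 `|` Eset Omega w2 s2 `<=` Omega.
  by move=> x [[]|[]].
apply: ge0_integral_setU_le; [exact: measurable_Eset|exact: measurable_Eset| |].
- by apply/measurable_EFinP; apply: measurable_funS mphi.
- by move=> x /EO /phi_ge0; rewrite lee_fin.
Qed.

Lemma integral_le_nneseries_increments (D : set T) (S : nat -> set T)
    (f : T -> R) (h b : nat -> R) :
  measurable D -> D `<=` Omega -> measurable_fun D f ->
  (forall x, D x -> 0 <= f x) ->
  (forall j, measurable (S j)) -> (forall j, S j `<=` Omega) ->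
  h 0%N = 0 -> (forall j, h j <= h j.+1) ->
  (forall x, D x -> exists K, ~ S K x) ->
  (forall x K, D x -> ~ S K x -> f x <= h K) ->
  (forall j, \int[mu]_(x in S j) (phi x)%:E <= (b j)%:E)%E ->
  (\int[mu]_(x in D) (f x * phi x)%:E
    <= \sum_(j <oo) ((h j.+1 - h j) * b j)%:E)%E.
Proof.
move=> mD DO mf f_ge0 mS SO h0 h_nd exK fh Sb.
have inc_ge0 j : 0 <= h j.+1 - h j by rewrite subr_ge0.
pose F j x := ((h j.+1 - h j) * \1_(S j) x * phi x)%:E.
have F_ge0 j x : Omega x -> (0 <= F j x)%E.
  by move=> Ox; rewrite lee_fin !mulr_ge0 ?phi_ge0.
have mF j : measurable_fun Omega (F j).
  apply/measurable_EFinP; apply: measurable_funM => //.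
  by apply: measurable_funM => //; exact: measurable_indic.
have mSF : measurable_fun Omega (fun x => \sum_(j <oo) F j x)%E.
  exact: ge0_emeasurable_sum (fun k x Ox _ => F_ge0 k x Ox) (fun k _ => mF k).
apply: (@le_trans _ _ (\int[mu]_(x in D) \sum_(j <oo) F j x)%E).
  apply: ge0_le_integral => //.
  - by move=> x Dx; rewrite lee_fin mulr_ge0 ?f_ge0 //; exact/phi_ge0/DO.
  - apply/measurable_EFinP; apply: measurable_funM => //.
    exact: measurable_funS mphi.
  - exact: measurable_funS mSF.
  - move=> x Dx; apply: le_nneseries_increments_indic => //.
    + exact/phi_ge0/DO.
    + exact: exK.
    + by move=> K; exact: fh.
apply: le_trans (ge0_subset_integral _ _ _ mSF _ DO) _ => //.
  by move=> x Ox; apply: nneseries_ge0 => j _ _; exact: F_ge0.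
rewrite integral_nneseries //; apply: lee_nneseries => [j _ _|j _].
  by apply: integral_ge0 => x; exact: F_ge0.
rewrite /F; under eq_integral do rewrite -mulrA EFinM.
rewrite ge0_integralZl_EFin //.
- by rewrite integral_indicM setIidr // EFinM; apply: lee_wpmul2l; rewrite ?lee_fin.
- by move=> x Ox; rewrite lee_fin mulr_ge0 ?phi_ge0.
- by apply/measurable_EFinP; apply: measurable_funM => //; exact: measurable_indic.
Qed.

Variables (g : R -> R -> R) (p q : R) (u v : T -> R) (Cu Cv : R).
Hypotheses (g_ge0 : forall s t, 0 <= t -> 0 <= g s t)
  (g_nd1 : forall s1 s2 t, 0 <= t -> s1 <= s2 -> g s1 t <= g s2 t)
  (g_nd2 : forall s t1 t2, 0 <= t1 -> t1 <= t2 -> g s t1 <= g s t2)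
  (g_cont1 : forall t, 0 <= t -> continuous (g^~ t)).
Hypotheses (p_gt0 : 0 < p) (q_gt0 : 0 < q).
Hypotheses (mfu : measurable_fun Omega u) (mfv : measurable_fun Omega v)
  (v_ge0 : forall x, Omega x -> 0 <= v x).
Hypotheses (Cu_ge0 : 0 <= Cu) (Cv_ge0 : 0 <= Cv)
  (eu : forall s, 0 < s -> (eweight mu phi Omega u s <= (Cu * s `^ (- p))%:E)%E)
  (ev : forall s, 0 < s -> (eweight mu phi Omega v s <= (Cv * s `^ (- q))%:E)%E).

Let r_gt0 : 0 < p / q. Proof. exact: divr_gt0. Qed.

Lemma integral_Eset_pair_le (s : R) : 0 < s ->
  (\int[mu]_(x in Eset Omega u s `|` Eset Omega v (s `^ (p / q))) (phi x)%:E
    <= ((Cu + Cv) * s `^ (- p))%:E)%E.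
Proof.
move=> s_gt0; apply: le_trans (integral_Eset_setU_le _ _ _ _ mfu mfv) _.
rewrite mulrDl EFinD; apply: leeD; first exact: eu.
apply: le_trans (ev _ (powR_gt0 (p / q) s_gt0)) _.
by rewrite -powRrM mulrN divfK ?gt_eqF.
Qed.

Lemma le_diag_notin_Eset (x : T) (t : R) : Omega x ->
  ~ (Eset Omega u t `|` Eset Omega v (t `^ (p / q))) x ->
  g (u x) (v x) <= g t (t `^ (p / q)).
Proof.
move=> Ox notE; have vx_ge0 := v_ge0 x Ox.
have /negP : ~ (t < `|u x|) by move=> ?; apply: notE; left.
have /negP : ~ (t `^ (p / q) < `|v x|) by move=> ?; apply: notE; right.
rewrite -!leNgt ger0_norm // => vt ut.
apply: le_trans (g_nd1 _ _ _ vx_ge0 (le_trans (ler_norm _) ut)) _.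
exact: g_nd2.
Qed.

Lemma exists_notin_Eset_dyadic (s0 : R) (x : T) : 0 < s0 -> Omega x ->
  exists K, ~ (Eset Omega u (dyadic_scale p s0 K)
               `|` Eset Omega v (dyadic_scale p s0 K `^ (p / q))) x.
Proof.
move=> s0_gt0 Ox; have vx_ge0 := v_ge0 x Ox.
have [K [uK vK]] := dyadic_scale_exceeds p s0 p_gt0 s0_gt0 `|u x| _ _ r_gt0 vx_ge0.
exists K => -[[_ uxK]|[_ vxK]].
- by move: uxK; rewrite ltNge uK.
- by move: vxK; rewrite ger0_norm // ltNge vK.
Qed.

Lemma integral_Eset_tail_le (s0 : R) : 0 < s0 ->
  (\int[mu]_(x in Eset Omega u s0 `|` Eset Omega v (s0 `^ (p / q)))
      (g (u x) (v x) * phi x)%:E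
    <= (2 * p * (Cu + Cv))%:E *
       \int[lebesgue_measure]_(s in `[s0, +oo[)
         (s `^ (-1 - p) * g s (s `^ (p / q)))%:E)%E.
Proof.
move=> s0_gt0; set s := dyadic_scale p s0.
pose G t := g t (t `^ (p / q)).
pose h j := if j is 0 then 0 else G (s j).
pose S j := Eset Omega u (s j) `|` Eset Omega v (s j `^ (p / q)).
have G_nd t t' : 0 <= t -> t <= t' -> G t <= G t'.
  exact: nondecreasing_diag_powR (ltW r_gt0) t t'.
have G_nd_s0 t t' : s0 <= t -> t <= t' -> G t <= G t'.
  by move=> s0t; apply: G_nd; exact: le_trans (ltW s0_gt0) s0t.
have G_ge0 t : 0 <= G t by exact/g_ge0/powR_ge0.
have h_nd j : h j <= h j.+1.
  case: j => [|j]; first exact: G_ge0.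
  by apply: G_nd; [exact/ltW/dyadic_scale_gt0 | exact/ltW/dyadic_scale_ltS].
have SO j : S j `<=` Omega by move=> x [[]|[]].
have mS j : measurable (S j) by apply: measurableU; exact: measurable_Eset.
have -> : Eset Omega u s0 `|` Eset Omega v (s0 `^ (p / q)) = S 0%N.
  by rewrite /S /s dyadic_scale0.
apply: le_trans (@integral_le_nneseries_increments _ S _ h
  (fun j => (Cu + Cv) * s j `^ (- p)) (mS 0%N) (SO 0%N) _ _ mS SO erefl h_nd
  _ _ _) _.
- apply: measurable_funS (SO 0%N) _ => //.
  exact: measurable_fun_nondecreasing2.
- by move=> x /SO Ox; apply/g_ge0/v_ge0.
- by move=> x /SO Ox; exact: exists_notin_Eset_dyadic.
- move=> x [|K] S0x notSK //.
  exact: le_diag_notin_Eset (SO 0%N x S0x) notSK.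
- by move=> j; exact/integral_Eset_pair_le/dyadic_scale_gt0.
under eq_eseriesr do rewrite mulrCA EFinM.
rewrite nneseriesZl; last by move=> j _; rewrite lee_fin mulr_ge0 ?subr_ge0 ?powR_ge0.
rewrite [(2 * p * _)%R]mulrC EFinM -muleA.
apply: lee_wpmul2l; first by rewrite lee_fin addr_ge0.
apply: dyadic_increments_le_integral => //.
- by apply: (@nondecreasing_halfline_measurable _ s0 _ _ _ _ G_nd_s0).
- by move=> t _; exact: G_ge0.
- by case=> [|j] //=; exact: G_ge0.
- by case=> [|j] //=; exact: G_ge0.
Qed.

End weighted_level_sets.

Theorem lemma2p6 (R : realType) (d : measure_display) (T : measurableType d)
  (mu : {measure set T -> \bar R}) (Omega : set T) (phi : T -> R)
  (g : R -> R -> R) (p q : R) (u v : T -> R) (Cu Cv : R) :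
  measurable Omega ->
  measurable_fun Omega phi -> (forall x, Omega x -> 0 < phi x) ->
  (* g : R x R_+ -> R_+ *)
  (forall s t, 0 <= t -> 0 <= g s t) ->
  (* non-decreasing in each variable *)
  (forall s1 s2 t, 0 <= t -> s1 <= s2 -> g s1 t <= g s2 t) ->
  (forall s t1 t2, 0 <= t1 -> t1 <= t2 -> g s t1 <= g s t2) ->
  (* locally Lipschitz in each variable *)
  (forall t, 0 <= t -> locLip_on setT (fun s => g s t)) ->
  (forall s, locLip_on [set t | 0 <= t] (fun t => g s t)) ->
  g 0 0 = 0 ->
  0 < p -> 0 < q ->
  (\int[lebesgue_measure]_(s in `[1%R, +oo[%classic)
     (s `^ (- 1 - p) * g s (s `^ (p / q)))%:E < +oo)%E ->
  measurable_fun Omega u -> measurable_fun Omega v ->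
  (forall x, Omega x -> 0 <= v x) ->
  0 < Cu -> 0 < Cv ->
  (forall s, 0 < s -> (eweight mu phi Omega u s <= (Cu * s `^ (- p))%:E)%E) ->
  (forall s, 0 < s -> (eweight mu phi Omega v s <= (Cv * s `^ (- q))%:E)%E) ->
  forall s0 : R, 0 < s0 ->
  (\int[mu]_(x in Omega) (`|g (u x) (v x)| * phi x)%:E
   <= \int[mu]_(x in Omega `&` (Omega `\` Eset Omega u s0)
                           `&` (Omega `\` Eset Omega v (s0 `^ (p / q))))
          (g (u x) (v x) * phi x)%:E
      + (2 * p * (Cu + Cv))%:E *
        \int[lebesgue_measure]_(s in `[s0, +oo[%classic)
          (s `^ (- 1 - p) * g s (s `^ (p / q)))%:E)%E.
Proof.
move=> mOmega mphi phi_gt0 g_ge0 g_nd1 g_nd2 g_lip1 _ _ p_gt0 q_gt0 _ mfu mfv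
  v_ge0 Cu_gt0 Cv_gt0 eu ev s0 s0_gt0.
have phi_ge0 x : Omega x -> 0 <= phi x by move/phi_gt0/ltW.
have g_cont1 t : 0 <= t -> continuous (g^~ t) by move/g_lip1/locLip_continuous.
set E := Eset Omega u s0 `|` Eset Omega v (s0 `^ (p / q)).
have EO : E `<=` Omega by move=> x [[]|[]].
have mE : measurable E by apply: measurableU; exact: measurable_Eset.
have -> : Omega `&` (Omega `\` Eset Omega u s0)
            `&` (Omega `\` Eset Omega v (s0 `^ (p / q))) = Omega `\` E.
  apply/seteqP; split => [x [[Ox [_ nu]] [_ nv]]|x [Ox nE]].
    by split => // -[/nu|/nv].
  have nu : ~ Eset Omega u s0 x by move=> ?; apply: nE; left.
  have nv : ~ Eset Omega v (s0 `^ (p / q)) x by move=> ?; apply: nE; right.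
  by do ![split].
rewrite (eq_integral (fun x => (g (u x) (v x) * phi x)%:E)); last first.
  by move=> x /[!inE] Ox; rewrite ger0_norm // g_ge0 // v_ge0.
rewrite -{1}(setDUK EO) ge0_integral_setU //; last 4 first.
- exact: measurableD.
- rewrite setDUK //; apply/measurable_EFinP; apply: measurable_funM => //.
  exact: measurable_fun_nondecreasing2.
- by rewrite setDUK // => x Ox; rewrite lee_fin mulr_ge0 ?g_ge0 ?v_ge0 ?phi_ge0.
- by rewrite disj_set2E setDIK.
rewrite addeC; apply: leeD2l.
by apply: integral_Eset_tail_le => //; exact: ltW.
Qed.
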